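(* For any $K\in\mathbb N$, there exists a $\textsc{ReLU}$+$\textsc{Step}$ network $f:\mathbb{R}\rightarrow\mathbb{R}$ of width $2$ such that $f(x)=q_K(x)$ for all $x\in[0,1]$.
   Context: $\mathcal C_K:=\{0,2^{-K},2\cdot 2^{-K},\dots,1-2^{-K}\}$ and $q_K:[0,1]\to\mathcal C_K$, $q_K(x):=\max\{c\in\mathcal C_K: c\le x\}$ (so $q_K(1)=1-2^{-K}$). $\textsc{ReLU}(x)=\max\{x,0\}$, $\textsc{Step}(x)=\mathbf 1[x\ge0]$. A $\textsc{ReLU}$+$\textsc{Step}$ network is $t_L\circ\sigma_{L-1}\circ\cdots\circ\sigma_1\circ t_1$ with affine maps $t_\ell:\mathbb R^{d_{\ell-1}}\to\mathbb R^{d_\ell}$ and $\sigma_\ell$ applying to each coordinate an activation chosen (per neuron) from $\{\textsc{ReLU},\textsc{Step}\}$; its width is $\max\{d_1,\dots,d_{L-1}\}$. *)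

From Stdlib Require Import Reals List Lra.
Import ListNotations.
Open Scope R_scope.

Inductive act := ReLU | Step.

Definition relu (x : R) : R := Rmax x 0.
Definition step (x : R) : R := if Rle_dec 0 x then 1 else 0.

Definition apply_act (a : act) (x : R) : R :=
  match a with ReLU => relu x | Step => step x end.

Definition dot (w v : list R) : R := fold_right Rplus 0 (map (fun p => fst p * snd p) (combine w v)).
Definition affine (W : list (list R)) (b : list R) (v : list R) : list R :=
  map (fun p => dot (fst p) v + snd p) (combine W b).

Definition affine_wf (m n : nat) (W : list (list R)) (b : list R) : Prop :=
  length W = n /\ length b = n /\ Forall (fun row => length row = m) W.

Record layer := mkLayer { lW : list (list R); lb : list R; lacts : list act }.

Definition layer_out_dim (l : layer) : nat := length (lb l).

Definition eval_layer (l : layer) (v : list R) : list R :=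
  map (fun p => apply_act (fst p) (snd p)) (combine (lacts l) (affine (lW l) (lb l) v)).

Fixpoint hidden_wf (m : nat) (ls : list layer) (dout : nat) : Prop :=
  match ls with
  | [] => m = dout
  | l :: ls' => affine_wf m (layer_out_dim l) (lW l) (lb l)
                /\ length (lacts l) = layer_out_dim l
                /\ hidden_wf (layer_out_dim l) ls' dout
  end.

(* A ReLU+Step network R -> R: t_L o sigma_{L-1} o t_{L-1} o ... o sigma_1 o t_1,
   here: a nonempty list of hidden layers (t_l, sigma_l), l=1..L-1, and a final affine t_L. *)
Record network := mkNet { hidden : list layer; outW : list (list R); outb : list R }.

Definition net_wf (N : network) : Prop :=
  hidden N <> [] /\
  exists d, hidden_wf 1 (hidden N) d /\ affine_wf d 1 (outW N) (outb N).

Definition width (N : network) : nat :=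
  fold_right max 0%nat (map layer_out_dim (hidden N)).

Definition eval_net (N : network) (x : R) : R :=
  hd 0 (affine (outW N) (outb N) (fold_left (fun v l => eval_layer l v) (hidden N) [x])).

Definition in_CK (K : nat) (c : R) : Prop :=
  exists i : nat, (i < 2 ^ K)%nat /\ c = INR i / 2 ^ K.

Definition is_qK (K : nat) (x y : R) : Prop :=
  in_CK K y /\ y <= x /\ forall c, in_CK K c -> c <= x -> c <= y.

From Stdlib Require Import Reals List Lra Lia.
Import ListNotations.
Open Scope R_scope.

(* Stage i = 0, ..., 2^K - 1 keeps the current value s when s >= t_i and replaces it by
   min(s, i 2^-K) otherwise, where t_i = (i+1) 2^-K, except that the last threshold is 2
   so that the last stage always clamps.  Two width-2 layers implement a stage, since
   c - ReLU(c - s) = min(s, c) and adding ReLU(s + 1[s >= t] - c - 1) restores s exactly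
   when the step fires.  Sweeping i upwards from s = x, the value x survives until the
   cell [k 2^-K, t_k) containing it, where it becomes k 2^-K = q_K(x), which all later
   stages leave untouched. *)

Definition run (ls : list layer) (v : list R) : list R :=
  fold_left (fun v l => eval_layer l v) ls v.

Lemma run_app ls1 ls2 v : run (ls1 ++ ls2) v = run ls2 (run ls1 v).
Proof. apply fold_left_app. Qed.

Definition square_layer (d : nat) (l : layer) : Prop :=
  affine_wf d d (lW l) (lb l) /\ length (lacts l) = d.

Lemma square_layer_out_dim d l : square_layer d l -> layer_out_dim l = d.
Proof. intros [[_ [Hb _]] _]; exact Hb. Qed.

Lemma hidden_wf_square d ls : Forall (square_layer d) ls -> hidden_wf d ls d.
Proof.
  induction 1 as [|l ls [[HW [Hb Hrows]] Hacts] _ IH]; simpl; auto.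
  unfold layer_out_dim; rewrite Hb.
  repeat split; auto.
Qed.

Lemma fold_max_uniform d ls :
  ls <> [] -> Forall (fun l => layer_out_dim l = d) ls ->
  fold_right max 0%nat (map layer_out_dim ls) = d.
Proof.
  induction ls as [|l ls IH]; intros Hne Hall; [contradiction|].
  inversion Hall as [|? ? Hl Hrest]; subst.
  destruct ls as [|l' ls]; simpl in *; [lia|].
  rewrite IH by (discriminate || assumption). lia.
Qed.

Lemma relu_of_nonneg y : 0 <= y -> relu y = y.
Proof. intros; apply Rmax_left; assumption. Qed.

Lemma relu_of_nonpos y : y <= 0 -> relu y = 0.
Proof. intros; apply Rmax_right; assumption. Qed.

Definition input_layer : layer := mkLayer [[-1]; [1]] [0; 0] [ReLU; ReLU].
Definition gate_layer (a t : R) : layer := mkLayer [[-1; 1]; [-1; 1]] [a; a - t] [ReLU; Step].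
Definition merge_layer (c : R) : layer := mkLayer [[-1; 0]; [1; 1]] [c; -c - 1] [ReLU; ReLU].

(* The pair [n1; n2] entering a stage encodes a - n1 + n2, and leaves it encoding c - n1 + n2. *)
Definition stage_layers (a c t : R) : list layer := [gate_layer a t; merge_layer c].

Lemma input_layer_eval x : eval_layer input_layer [x] = [relu (-x); relu x].
Proof.
  unfold eval_layer, affine, dot; simpl.
  f_equal; [|f_equal]; f_equal; ring.
Qed.

Lemma gate_layer_eval a t n1 n2 :
  eval_layer (gate_layer a t) [n1; n2] = [relu (a - n1 + n2); step (a - n1 + n2 - t)].
Proof.
  unfold eval_layer, affine, dot; simpl.
  f_equal; [|f_equal]; f_equal; ring.
Qed.

Lemma merge_layer_eval c r b :
  eval_layer (merge_layer c) [r; b] = [relu (c - r); relu (r + b - c - 1)].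
Proof.
  unfold eval_layer, affine, dot; simpl.
  f_equal; [|f_equal]; f_equal; ring.
Qed.

Lemma stage_layers_square a c t : Forall (square_layer 2) (stage_layers a c t).
Proof. repeat constructor. Qed.

Definition stage_fun (c t s : R) : R := if Rle_dec t s then s else Rmin s c.

Lemma stage_fun_bounds c t s : 0 <= c -> 0 <= s <= 1 -> 0 <= stage_fun c t s <= 1.
Proof. unfold stage_fun, Rmin; intros; repeat destruct Rle_dec; lra. Qed.

Lemma merge_gate_stage_fun c t s : 0 <= s <= c + 1 ->
  c - relu (c - relu s) + relu (relu s + step (s - t) - c - 1) = stage_fun c t s.
Proof.
  unfold stage_fun, relu, step, Rmax, Rmin; intros.
  repeat destruct Rle_dec; lra.
Qed.

Lemma run_stage_layers a c t n1 n2 : 0 <= a - n1 + n2 <= c + 1 ->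
  exists n1' n2', run (stage_layers a c t) [n1; n2] = [n1'; n2'] /\
                  c - n1' + n2' = stage_fun c t (a - n1 + n2).
Proof.
  intros Hs. unfold run; simpl.
  rewrite gate_layer_eval, merge_layer_eval.
  do 2 eexists; split; [reflexivity|].
  apply merge_gate_stage_fun; assumption.
Qed.

Section Quantizer.

Variable K : nat.

Definition ncells : nat := 2 ^ K.
Definition grid (i : nat) : R := INR i / 2 ^ K.
Definition threshold (i : nat) : R := if Nat.ltb (S i) ncells then grid (S i) else 2.
Definition grid_index (x : R) (k : nat) : Prop := grid k <= x < threshold k.

Lemma ncells_pos : (0 < ncells)%nat.
Proof. unfold ncells. apply Nat.neq_0_lt_0, Nat.pow_nonzero. lia. Qed.

Lemma pow2K_pos : 0 < 2 ^ K.
Proof. apply pow_lt; lra. Qed.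

Lemma grid_0 : grid 0 = 0.
Proof. unfold grid, Rdiv; simpl; ring. Qed.

Lemma grid_le i j : (i <= j)%nat -> grid i <= grid j.
Proof.
  intros H. unfold grid, Rdiv. apply Rmult_le_compat_r; [|apply le_INR; exact H].
  left; apply Rinv_0_lt_compat, pow2K_pos.
Qed.

Lemma grid_nonneg i : 0 <= grid i.
Proof. rewrite <- grid_0. apply grid_le. lia. Qed.

Lemma grid_lt i j : (i < j)%nat -> grid i < grid j.
Proof.
  intros H. unfold grid, Rdiv. apply Rmult_lt_compat_r; [|apply lt_INR; exact H].
  apply Rinv_0_lt_compat, pow2K_pos.
Qed.

Lemma grid_ncells : grid ncells = 1.
Proof.
  unfold grid, ncells. rewrite pow_INR. replace (INR 2) with 2 by (simpl; ring).
  field. apply Rgt_not_eq, pow2K_pos.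
Qed.

Lemma grid_lt_1 i : (i < ncells)%nat -> grid i < 1.
Proof. rewrite <- grid_ncells. apply grid_lt. Qed.

Lemma threshold_eq i : (S i < ncells)%nat -> threshold i = grid (S i).
Proof. intros H. unfold threshold. apply Nat.ltb_lt in H. rewrite H. reflexivity. Qed.

Lemma grid_lt_threshold k i : (k <= i)%nat -> (k < ncells)%nat -> grid k < threshold i.
Proof.
  intros Hki Hk. unfold threshold. destruct (Nat.ltb_spec (S i) ncells).
  - apply grid_lt; lia.
  - pose proof (grid_lt_1 k Hk); lra.
Qed.

Lemma grid_index_exists x : 0 <= x <= 1 -> exists k, (k < ncells)%nat /\ grid_index x k.
Proof.
  intros Hx.
  assert (Hsearch : forall n, (n < ncells)%nat ->
            exists k, (k <= n)%nat /\ grid k <= x /\ (x < threshold k \/ k = n)).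
  { induction n as [|n IH]; intros Hn.
    - exists 0%nat. rewrite grid_0. repeat split; auto; lra.
    - destruct IH as [k [Hk [Hgk [Hlt | ->]]]]; [lia| |].
      + exists k. repeat split; auto.
      + destruct (Rlt_le_dec x (threshold n)) as [Hlt | Hge].
        * exists n. repeat split; auto.
        * exists (S n). rewrite threshold_eq in Hge by exact Hn. repeat split; auto. }
  pose proof ncells_pos as Hnn.
  destruct (Hsearch (pred ncells)) as [k [Hk [Hgk Hthr]]]; [lia|].
  exists k. split; [lia|]. split; [assumption|].
  destruct Hthr as [Hlt | ->]; [assumption|].
  unfold threshold. destruct (Nat.ltb_spec (S (pred ncells)) ncells); [lia | lra].
Qed.

Lemma grid_index_is_qK x k : (k < ncells)%nat -> grid_index x k -> is_qK K x (grid k).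
Proof.
  intros Hk [Hgk Hthr]. split; [|split].
  - exists k. split; [exact Hk | reflexivity].
  - exact Hgk.
  - intros c [i [Hi ->]] Hix. fold (grid i) in *.
    destruct (Nat.le_gt_cases i k) as [Hle | Hgt]; [apply grid_le; exact Hle|].
    rewrite threshold_eq in Hthr by (unfold ncells in *; lia).
    pose proof (grid_le (S k) i Hgt). lra.
Qed.

Definition sweep (m : nat) (x : R) : R :=
  fold_left (fun s i => stage_fun (grid i) (threshold i) s) (seq 0 m) x.

Lemma sweep_S m x : sweep (S m) x = stage_fun (grid m) (threshold m) (sweep m x).
Proof. unfold sweep. rewrite seq_S, fold_left_app. reflexivity. Qed.

Lemma sweep_bounds m x : 0 <= x <= 1 -> 0 <= sweep m x <= 1.
Proof.
  intros Hx. induction m as [|m IH]; [exact Hx|].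
  rewrite sweep_S. apply stage_fun_bounds; [apply grid_nonneg | exact IH].
Qed.

Lemma sweep_eq x k m : (k < ncells)%nat -> grid_index x k ->
  sweep m x = if Nat.leb m k then x else grid k.
Proof.
  intros Hk [Hgk Hthr]. induction m as [|m IH]; [reflexivity|].
  rewrite sweep_S, IH. unfold stage_fun.
  destruct (Nat.leb_spec m k), (Nat.leb_spec (S m) k); try lia.
  - assert (threshold m <= x).
    { rewrite threshold_eq by lia. pose proof (grid_le (S m) k ltac:(lia)). lra. }
    destruct Rle_dec; [reflexivity | lra].
  - replace m with k by lia.
    destruct Rle_dec; [lra|]. apply Rmin_right; exact Hgk.
  - pose proof (grid_lt_threshold k m ltac:(lia) Hk).
    destruct Rle_dec; [lra|]. apply Rmin_left, grid_le; lia.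
Qed.

Definition stage (i : nat) : list layer := stage_layers (grid (pred i)) (grid i) (threshold i).

Definition quantizer : network :=
  mkNet (input_layer :: flat_map stage (seq 0 ncells)) [[-1; 1]] [grid (pred ncells)].

Lemma run_stages x m : 0 <= x <= 1 ->
  exists n1 n2, run (flat_map stage (seq 0 m)) [relu (-x); relu x] = [n1; n2] /\
                grid (pred m) - n1 + n2 = sweep m x.
Proof.
  intros Hx. induction m as [|m IH].
  - exists (relu (-x)), (relu x). split; [reflexivity|].
    rewrite relu_of_nonpos, relu_of_nonneg by lra.
    change (grid 0 - 0 + x = x). rewrite grid_0; ring.
  - destruct IH as [n1 [n2 [E Hs]]].
    assert (Hrange : 0 <= grid (pred m) - n1 + n2 <= grid m + 1).
    { rewrite Hs. pose proof (sweep_bounds m x Hx). pose proof (grid_nonneg m). lra. }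
    destruct (run_stage_layers _ _ (threshold m) _ _ Hrange) as [n1' [n2' [E' Hs']]].
    exists n1', n2'. split.
    + rewrite seq_S, flat_map_app, run_app, E. exact E'.
    + rewrite sweep_S, <- Hs. exact Hs'.
Qed.

Lemma quantizer_eval x : 0 <= x <= 1 -> eval_net quantizer x = sweep ncells x.
Proof.
  intros Hx. destruct (run_stages x ncells Hx) as [n1 [n2 [E Hs]]].
  unfold eval_net; simpl. rewrite input_layer_eval.
  change (fold_left _ _ ?v) with (run (flat_map stage (seq 0 ncells)) v). rewrite E.
  unfold affine, dot; simpl. lra.
Qed.

Lemma quantizer_wf : net_wf quantizer.
Proof.
  split; [discriminate|]. exists 2%nat. split.
  - simpl. split; [repeat split; repeat constructor|]. split; [reflexivity|].
    apply hidden_wf_square, Forall_flat_map, Forall_forall.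
    intros i _. apply stage_layers_square.
  - repeat split; repeat constructor.
Qed.

Lemma quantizer_width : width quantizer = 2%nat.
Proof.
  apply fold_max_uniform; [discriminate|]. constructor; [reflexivity|].
  apply Forall_flat_map, Forall_forall. intros i _.
  apply (Forall_impl _ (square_layer_out_dim 2)), stage_layers_square.
Qed.

End Quantizer.

Theorem lemma4 : forall K : nat,
  exists N : network,
    net_wf N /\ width N = 2%nat /\
    forall x : R, 0 <= x <= 1 -> is_qK K x (eval_net N x).
Proof.
  intros K. exists (quantizer K).
  split; [apply quantizer_wf|]. split; [apply quantizer_width|].
  intros x Hx.
  destruct (grid_index_exists K x Hx) as [k [Hk Hidx]].
  rewrite quantizer_eval, (sweep_eq K x k) by assumption.
  replace (Nat.leb (ncells K) k) with false by (symmetry; apply Nat.leb_gt; exact Hk).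
  apply grid_index_is_qK; assumption.
Qed.
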